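(* Let $\mathcal{L}$ be an abstract logic with the weak isomorphism property, let $\tau$ be a vocabulary and let $T \subseteq \mathcal{L}(\tau)$ be a theory. If $T$ has a model $\mathfrak{A}$ of cardinality $\lambda$, then for every cardinal $\kappa > \lambda$ there exist a model $\mathfrak{B}$ of $T$ of cardinality $\kappa$ and a surjective strict homomorphism from $\mathfrak{B}$ onto $\mathfrak{A}$ (and hence a weak isomorphism between $\mathfrak{B}$ and $\mathfrak{A}$).
   Context: Vocabularies may contain relation, function and constant symbols. An abstract logic $\mathcal{L}$ assigns to each vocabulary $\tau$ a set of sentences $\mathcal{L}(\tau)$ and a satisfaction relation between $\tau$-structures and these sentences, satisfying the basic closure properties of abstract logics in the sense of Barwise–Feferman (isomorphism, reduct/expansion, renaming, closure under Boolean connectives, etc.), where the atom property is taken with respect to first-order logic without identity $\mathcal{L}^-_{\omega\omega}$ (i.e. atomic formulas are those not involving $=$); the relativization property is not required. A strict homomorphism from $\mathfrak{B}$ to $\mathfrak{A}$ is a map $h\colon B\to A$ such that for every $n$-ary relation symbol $P$ and $b_1,\dots,b_n\in B$: $P^{\mathfrak{B}}(b_1,\dots,b_n)$ iff $P^{\mathfrak{A}}(h(b_1),\dots,h(b_n))$; for every function symbol $f$: $h(f^{\mathfrak{B}}(b_1,\dots,b_n)) = f^{\mathfrak{A}}(h(b_1),\dots,h(b_n))$; and $h(c^{\mathfrak{B}})=c^{\mathfrak{A}}$ for constants $c$. A weak isomorphism (relativeness correspondence) between $\tau$-structures $\mathfrak{A}$ and $\mathfrak{B}$ is a relation $R\subseteq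 A\times B$ with domain all of $A$ and range all of $B$ such that whenever $a_iRb_i$ for $i=1,\dots,n$: $P^{\mathfrak{A}}(a_1,\dots,a_n)$ iff $P^{\mathfrak{B}}(b_1,\dots,b_n)$ for each $n$-ary relation symbol $P$, $f^{\mathfrak{A}}(a_1,\dots,a_n)\,R\,f^{\mathfrak{B}}(b_1,\dots,b_n)$ for each $n$-ary function symbol $f$, and $c^{\mathfrak{A}} R c^{\mathfrak{B}}$ for each constant $c$. We write $\mathfrak{A}\sim\mathfrak{B}$ if such an $R$ exists. $\mathcal{L}$ has the weak isomorphism property if $\mathfrak{A}\sim\mathfrak{B}$ implies that $\mathfrak{A}$ and $\mathfrak{B}$ satisfy the same $\mathcal{L}$-sentences. *)

From Stdlib Require Import Fin.

Record vocab : Type := Vocab {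
  rel_sym : Type;
  rel_arity : rel_sym -> nat;
  fun_sym : Type;
  fun_arity : fun_sym -> nat;
  const_sym : Type
}.

Record structure (tau : vocab) (A : Type) : Type := Struct {
  rel_interp : forall P : rel_sym tau, (Fin.t (rel_arity tau P) -> A) -> Prop;
  fun_interp : forall f : fun_sym tau, (Fin.t (fun_arity tau f) -> A) -> A;
  const_interp : const_sym tau -> A
}.
Arguments rel_interp {tau A} _ _ _.
Arguments fun_interp {tau A} _ _ _.
Arguments const_interp {tau A} _ _.

Definition strict_hom {tau : vocab} {B A : Type}
  (MB : structure tau B) (MA : structure tau A) (h : B -> A) : Prop :=
  (forall (P : rel_sym tau) (bs : Fin.t (rel_arity tau P) -> B),
      rel_interp MB P bs <-> rel_interp MA P (fun i => h (bs i))) /\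
  (forall (f : fun_sym tau) (bs : Fin.t (fun_arity tau f) -> B),
      h (fun_interp MB f bs) = fun_interp MA f (fun i => h (bs i))) /\
  (forall c : const_sym tau, h (const_interp MB c) = const_interp MA c).

Definition surjective {X Y : Type} (h : X -> Y) : Prop :=
  forall y, exists x, h x = y.

Definition injective {X Y : Type} (h : X -> Y) : Prop :=
  forall x x', h x = h x' -> x = x'.

Definition isomorphism {tau : vocab} {A B : Type}
  (MA : structure tau A) (MB : structure tau B) (h : A -> B) : Prop :=
  injective h /\ surjective h /\ strict_hom MA MB h.

Definition weak_iso_rel {tau : vocab} {A B : Type}
  (MA : structure tau A) (MB : structure tau B) (R : A -> B -> Prop) : Prop :=
  (forall a, exists b, R a b) /\
  (forall b, exists a, R a b) /\
  (forall (P : rel_sym tau) (as_ : Fin.t (rel_arity tau P) -> A)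
          (bs : Fin.t (rel_arity tau P) -> B),
      (forall i, R (as_ i) (bs i)) ->
      (rel_interp MA P as_ <-> rel_interp MB P bs)) /\
  (forall (f : fun_sym tau) (as_ : Fin.t (fun_arity tau f) -> A)
          (bs : Fin.t (fun_arity tau f) -> B),
      (forall i, R (as_ i) (bs i)) ->
      R (fun_interp MA f as_) (fun_interp MB f bs)) /\
  (forall c : const_sym tau, R (const_interp MA c) (const_interp MB c)).

Definition weakly_isomorphic {tau : vocab} {A B : Type}
  (MA : structure tau A) (MB : structure tau B) : Prop :=
  exists R, weak_iso_rel MA MB R.

Inductive cterm (tau : vocab) : Type :=
| TConst : const_sym tau -> cterm tau
| TFun : forall f : fun_sym tau, (Fin.t (fun_arity tau f) -> cterm tau) -> cterm tau.
Arguments TConst {tau} _.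
Arguments TFun {tau} _ _.

Fixpoint eval_term {tau : vocab} {A : Type} (M : structure tau A)
  (t : cterm tau) : A :=
  match t with
  | TConst c => const_interp M c
  | TFun f ts => fun_interp M f (fun i => eval_term M (ts i))
  end.

Record atom_sentence (tau : vocab) : Type := Atom {
  atom_rel : rel_sym tau;
  atom_args : Fin.t (rel_arity tau atom_rel) -> cterm tau
}.

Definition sat_atom {tau : vocab} {A : Type} (M : structure tau A)
  (a : atom_sentence tau) : Prop :=
  rel_interp M (atom_rel tau a) (fun i => eval_term M (atom_args tau a i)).

(** Abstract logics (the basic Barwise--Feferman closure properties that can
    be stated per vocabulary). *)
Record abstract_logic : Type := AbsLogic {
  sentence : vocab -> Type;
  sat : forall (tau : vocab) (A : Type), structure tau A -> sentence tau -> Prop;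
  logic_iso : forall tau (A B : Type) (MA : structure tau A) (MB : structure tau B)
      (h : A -> B), isomorphism MA MB h ->
      forall phi, sat tau A MA phi <-> sat tau B MB phi;
  logic_neg : forall tau (phi : sentence tau), exists psi : sentence tau,
      forall A (M : structure tau A), sat tau A M psi <-> ~ sat tau A M phi;
  logic_and : forall tau (phi chi : sentence tau), exists psi : sentence tau,
      forall A (M : structure tau A),
        sat tau A M psi <-> (sat tau A M phi /\ sat tau A M chi);
  logic_atom : forall tau (a : atom_sentence tau), exists psi : sentence tau,
      forall A (M : structure tau A), sat tau A M psi <-> sat_atom M a
}.

Arguments sat _ {tau A} _ _.

Definition weak_iso_property (L : abstract_logic) : Prop :=
  forall tau (A B : Type) (MA : structure tau A) (MB : structure tau B),
    weakly_isomorphic MA MB ->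
    forall phi : sentence L tau, sat L MA phi <-> sat L MB phi.

Definition is_model (L : abstract_logic) {tau : vocab} {A : Type}
  (M : structure tau A) (T : sentence L tau -> Prop) : Prop :=
  forall phi, T phi -> sat L M phi.

Definition card_lt (X Y : Type) : Prop :=
  (exists f : X -> Y, injective f) /\ ~ (exists g : Y -> X, injective g).

(* Embed A into K by an injection f and let h : K -> A be a left inverse of f.
   Pull the structure of A back along h: a relation holds of a tuple iff it holds
   of the image tuple, and functions and constants are evaluated in A and sent
   back through f.  Then h is a surjective strict homomorphism, its graph is a
   weak isomorphism, and the weak isomorphism property transfers T. *)

From Stdlib Require Import ClassicalEpsilon FunctionalExtensionality.

Lemma injective_has_retraction {X Y : Type} (f : X -> Y) :
  inhabited X -> injective f -> exists g : Y -> X, forall x, g (f x) = x.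
Proof.
  intros HX Hf.
  exists (fun y => epsilon HX (fun x => f x = y)).
  intro x. apply Hf.
  exact (epsilon_spec HX (fun x' => f x' = f x) (ex_intro _ x eq_refl)).
Qed.

Lemma retraction_surjective {X Y : Type} (h : X -> Y) (s : Y -> X) :
  (forall y, h (s y) = y) -> surjective h.
Proof. intros Hhs y. exists (s y). apply Hhs. Qed.

Section Pullback.

Variables (tau : vocab) (A K : Type) (MA : structure tau A).
Variables (h : K -> A) (s : A -> K).

Definition pullback_structure : structure tau K :=
  Struct tau K
    (fun P bs => rel_interp MA P (fun i => h (bs i)))
    (fun g bs => s (fun_interp MA g (fun i => h (bs i))))
    (fun c => s (const_interp MA c)).

Lemma pullback_strict_hom :
  (forall a, h (s a) = a) -> strict_hom pullback_structure MA h.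
Proof.
  intro Hhs. split; [|split]; intros; simpl.
  - reflexivity.
  - apply Hhs.
  - apply Hhs.
Qed.

End Pullback.

Lemma strict_hom_weak_iso_rel {tau : vocab} {B A : Type}
  (MB : structure tau B) (MA : structure tau A) (h : B -> A) :
  surjective h -> strict_hom MB MA h -> weak_iso_rel MB MA (fun b a => h b = a).
Proof.
  intros Hsurj [Hrel [Hfun Hconst]].
  split; [|split; [|split; [|split]]].
  - intro b. exists (h b). reflexivity.
  - exact Hsurj.
  - intros P bs as_ Hi.
    replace as_ with (fun i => h (bs i)) by (apply functional_extensionality; exact Hi).
    apply Hrel.
  - intros f bs as_ Hi.
    replace as_ with (fun i => h (bs i)) by (apply functional_extensionality; exact Hi).
    apply Hfun.
  - apply Hconst.
Qed.

Lemma weak_iso_property_model (L : abstract_logic) {tau : vocab} {B A : Type}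
  (MB : structure tau B) (MA : structure tau A) (T : sentence L tau -> Prop) :
  weak_iso_property L -> weakly_isomorphic MB MA ->
  is_model L MA T -> is_model L MB T.
Proof.
  intros HW Hwi HM phi Hphi.
  apply (HW _ _ _ MB MA Hwi). auto.
Qed.

Theorem lemma3 :
  forall (L : abstract_logic), weak_iso_property L ->
  forall (tau : vocab) (T : sentence L tau -> Prop)
         (A : Type) (MA : structure tau A),
    inhabited A ->
    is_model L MA T ->
    forall K : Type, card_lt A K ->
      exists MB : structure tau K,
        is_model L MB T /\
        (exists h : K -> A, surjective h /\ strict_hom MB MA h) /\
        weakly_isomorphic MB MA.
Proof.
  intros L HW tau T A MA HA HM K [[f Hf] _].
  destruct (injective_has_retraction f HA Hf) as [h Hhf].
  set (MB := pullback_structure tau A K MA h f).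
  assert (Hsurj : surjective h) by exact (retraction_surjective h f Hhf).
  assert (Hhom : strict_hom MB MA h) by exact (pullback_strict_hom tau A K MA h f Hhf).
  assert (Hwi : weakly_isomorphic MB MA)
    by (eexists; exact (strict_hom_weak_iso_rel MB MA h Hsurj Hhom)).
  exists MB. split; [|split].
  - exact (weak_iso_property_model L MB MA T HW Hwi HM).
  - exists h. split; assumption.
  - exact Hwi.
Qed.
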